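(* Let $p,q\ge1$, $\alpha:\mathbb Z_p\times\mathbb Z_q\to[0,1]$ a probability distribution with $\alpha(0,0)=0$, $\mathcal L_*(x)=\sum_{(i,j)}\alpha(p-i,q-j)(J_p^i\otimes J_q^j)x(J_p^i\otimes J_q^j)^*-x$ on $\mathcal M_p(\mathbb C)\otimes\mathcal M_q(\mathbb C)$, and $\mathcal T_{*t}=e^{t\mathcal L_*}$. Set $\alpha'(i,j)=\alpha(i,j)$ for $(i,j)\neq(0,0)$ and $\alpha'(0,0)=-1$, $\lambda_{kl}=\sum_{i,j}\alpha'(i,j)\overline\omega_p^{ik}\overline\omega_q^{jl}$ and $\Phi_{m,n}(t)=\sum_{k,l}\omega_p^{mk}\omega_q^{nl}e^{t\lambda_{kl}}$. Then: (i) for all $(i,j),(i',j')\in\mathbb Z_p\times\mathbb Z_q$ and $t\ge0$, $$\mathcal T_{*t}(|e_i\otimes e_j\rangle\langle e_{i'}\otimes e_{j'}|)=\frac{1}{pq}\sum_{m,n}\Phi_{m,n}(t)|e_{m+i}\otimes e_{n+j}\rangle\langle e_{m+i'}\otimes e_{n+j'}|,$$ and the functions $\Phi_{m,n}(t)$ are real-valued; (ii) $\Omega_t=\frac{1}{pq}\sum_{m,n}\Phi_{m,n}(t)|u_{mn}\rangle\langle u_{mn}|$, where $u_{mn}=\frac{1}{\sqrt{pq}}\sum_{i,j}(e_i\otimes e_j)\otimes(e_{m+i}\otimes e_{n+j})$.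
   Context: $\{e_j\}$ canonical bases of $\mathbb C^p,\mathbb C^q$ (indices mod $p$, $q$); $J_p=\sum_j|e_j\rangle\langle e_{j+1}|$, similarly $J_q$; $\omega_p,\omega_q$ primitive roots of unity of orders $p,q$; arguments of $\alpha$ mod $p,q$. With $\rho=\frac{1}{pq}\mathbf 1$, $\Omega_\rho=\frac{1}{\sqrt{pq}}\sum_{i,j}(e_i\otimes e_j)\otimes(e_i\otimes e_j)\in(\mathbb C^p\otimes\mathbb C^q)^{\otimes2}$ and $\Omega_t=(\mathrm{id}\otimes\mathcal T_{*t})(|\Omega_\rho\rangle\langle\Omega_\rho|)$. *)

From HB Require Import structures.
From mathcomp Require Import all_boot all_order all_algebra.
From mathcomp Require Import all_classical all_reals all_analysis.
From mathcomp.real_closed Require Import complex.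

Set Implicit Arguments.
Unset Strict Implicit.
Unset Printing Implicit Defensive.

Import Order.TTheory GRing.Theory Num.Theory.
Local Open Scope ring_scope.
Local Open Scope complex_scope.

Definition csum_lim {R : realType} (u : nat -> R[i]) : R[i] :=
  (limn (series (fun k => (complex.Re (u k) : R) : R^o))) +i*
  (limn (series (fun k => (complex.Im (u k) : R) : R^o))).

Definition cexp {R : realType} (z : R[i]) : R[i] :=
  csum_lim (fun k => z ^+ k / (k`!)%:R).

Definition vec (R : realType) (I : finType) := I -> R[i].
Definition op (R : realType) (I : finType) := I -> I -> R[i].

Definition opid {R : realType} {I : finType} : op R I :=
  fun a b => (a == b)%:R.
Definition opmul {R : realType} {I : finType} (A B : op R I) : op R I :=
  fun a b => \sum_(c : I) A a c * B c b.
Definition oppow {R : realType} {I : finType} (A : op R I) (n : nat) : op R I :=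
  iter n (opmul A) opid.
Definition opadj {R : realType} {I : finType} (A : op R I) : op R I :=
  fun a b => (A b a)^*.
Definition outer {R : realType} {I : finType} (u v : vec R I) : op R I :=
  fun a b => u a * (v b)^*.
Definition bvec {R : realType} {I : finType} (i : I) : vec R I :=
  fun a => (a == i)%:R.
Definition vtens {R : realType} {I J : finType} (u : vec R I) (v : vec R J)
  : vec R (I * J)%type := fun ab => u ab.1 * v ab.2.
Definition optens {R : realType} {I J : finType} (A : op R I) (B : op R J)
  : op R (I * J)%type := fun a b => A a.1 b.1 * B a.2 b.2.
(* id (x) T on operators of C^I (x) C^J, for T acting on operators of C^J *)
Definition idtens {R : realType} {I J : finType} (T : op R J -> op R J)
  (X : op R (I * J)%type) : op R (I * J)%type :=
  fun a b => T (fun k k' => X (a.1, k) (b.1, k')) a.2 b.2.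

Lemma ord_n_gt0 (n : nat) (i : 'I_n) : (0 < n)%N.
Proof. exact: leq_ltn_trans (leq0n i) (ltn_ord i). Qed.

Definition zadd {n : nat} (i j : 'I_n) : 'I_n :=
  Ordinal (ltn_pmod (i + j) (ord_n_gt0 i)).
Definition zopp {n : nat} (i : 'I_n) : 'I_n :=
  Ordinal (ltn_pmod (n - i) (ord_n_gt0 i)).
Definition zsucc {n : nat} (i : 'I_n) : 'I_n :=
  Ordinal (ltn_pmod i.+1 (ord_n_gt0 i)).

Definition Jshift (R : realType) (n : nat) : op R 'I_n :=
  fun a b => \sum_(j : 'I_n) outer (bvec j) (bvec (zsucc j)) a b.

Definition Lstar {R : realType} {p q : nat} (alpha : 'I_p -> 'I_q -> R)
  (x : op R ('I_p * 'I_q)%type) : op R ('I_p * 'I_q)%type :=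
  fun a b =>
    \sum_(ij : ('I_p * 'I_q)%type)
       (alpha (zopp ij.1) (zopp ij.2))%:C *
       (let U := optens (oppow (@Jshift R p) ij.1) (oppow (@Jshift R q) ij.2) in
        opmul (opmul U x) (opadj U)) a b
    - x a b.

Definition opexp {R : realType} {I : finType} (L : op R I -> op R I) (t : R)
  (x : op R I) : op R I :=
  fun a b => csum_lim (fun k => (t%:C) ^+ k / (k`!)%:R * iter k L x a b).

Definition Tstar {R : realType} {p q : nat} (alpha : 'I_p -> 'I_q -> R) (t : R)
  : op R ('I_p * 'I_q)%type -> op R ('I_p * 'I_q)%type :=
  opexp (Lstar alpha) t.

Definition alpha' {R : realType} {p q : nat} (alpha : 'I_p -> 'I_q -> R)
  (i : 'I_p) (j : 'I_q) : R :=
  if ((i : nat) == 0%N) && ((j : nat) == 0%N) then -1 else alpha i j.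

Definition lambda {R : realType} {p q : nat} (alpha : 'I_p -> 'I_q -> R)
  (wp wq : R[i]) (k : 'I_p) (l : 'I_q) : R[i] :=
  \sum_(i : 'I_p) \sum_(j : 'I_q)
     (alpha' alpha i j)%:C * (wp^*) ^+ (i * k) * (wq^*) ^+ (j * l).

Definition Phi {R : realType} {p q : nat} (alpha : 'I_p -> 'I_q -> R)
  (wp wq : R[i]) (m : 'I_p) (n : 'I_q) (t : R) : R[i] :=
  \sum_(k : 'I_p) \sum_(l : 'I_q)
     wp ^+ (m * k) * wq ^+ (n * l) * cexp (t%:C * lambda alpha wp wq k l).

Definition ebas {R : realType} {p q : nat} (i : 'I_p) (j : 'I_q)
  : vec R ('I_p * 'I_q)%type := vtens (bvec i) (bvec j).

Definition Omega_rho {R : realType} (p q : nat)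
  : vec R (('I_p * 'I_q) * ('I_p * 'I_q))%type :=
  fun a => ((Num.sqrt ((p * q)%:R : R))%:C)^-1 *
    \sum_(ij : ('I_p * 'I_q)%type)
       vtens (ebas ij.1 ij.2) (ebas ij.1 ij.2) a.

Definition uvec {R : realType} {p q : nat} (m : 'I_p) (n : 'I_q)
  : vec R (('I_p * 'I_q) * ('I_p * 'I_q))%type :=
  fun a => ((Num.sqrt ((p * q)%:R : R))%:C)^-1 *
    \sum_(ij : ('I_p * 'I_q)%type)
       vtens (ebas ij.1 ij.2) (ebas (zadd m ij.1) (zadd n ij.2)) a.

Definition Omega_t {R : realType} {p q : nat} (alpha : 'I_p -> 'I_q -> R) (t : R)
  : op R (('I_p * 'I_q) * ('I_p * 'I_q))%type :=
  idtens (Tstar alpha t) (outer (@Omega_rho R p q) (@Omega_rho R p q)).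

From HB Require Import structures.
From mathcomp Require Import all_boot all_order all_algebra.
From mathcomp Require Import all_classical all_reals all_analysis.
From mathcomp.real_closed Require Import complex.
From mathcomp Require Import ring.
Import Order.TTheory GRing.Theory Num.Theory.
Set Implicit Arguments.
Unset Strict Implicit.
Local Open Scope ring_scope.
Local Open Scope complex_scope.

(* On the group K = Z_p x Z_q, L_* acts on an operator sum_m c(m) |m + x><m + y|
   through its coefficients, by the convolution c |-> alpha * c - c.  The
   characters m |-> wp^(m.1 k) wq^(m.2 l) of K diagonalise this convolution with
   eigenvalues lambda_kl, and the unit mass at 0 is their average.  Hence
   L_*^k of a matrix unit is explicit and the exponential series can be summed
   termwise, which produces Phi.  As the convolution weights are real, every
   term of the series defining Phi_mn(t) is real.  Part (ii) reduces to (i)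
   because Omega_rho restricted to each block is a multiple of a matrix unit. *)

Section ComplexSeries.
Variable R : realType.
Local Open Scope classical_set_scope.
Implicit Types (u v : nat -> R[i]) (z w : R[i]).

Definition csum_to u z :=
  series (fun k => (complex.Re (u k) : R^o)) @ \oo --> (complex.Re z : R^o) /\
  series (fun k => (complex.Im (u k) : R^o)) @ \oo --> (complex.Im z : R^o).

Lemma csum_limE u z : csum_to u z -> csum_lim u = z.
Proof.
by case=> hR hI; rewrite /csum_lim (cvg_lim _ hR) // (cvg_lim _ hI) //; case: z {hR hI}.
Qed.

Lemma eq_csum_to u v z : u =1 v -> csum_to u z -> csum_to v z.
Proof. by move=> /funext->. Qed.

Lemma cvg_series_lincomb (a b : R) (f g : nat -> R) (l m : R) :
  series (f : R^o ^nat) @ \oo --> (l : R^o) ->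
  series (g : R^o ^nat) @ \oo --> (m : R^o) ->
  series (fun k => (a * f k + b * g k : R^o)) @ \oo --> (a * l + b * m : R^o).
Proof.
move=> hf hg.
have -> : series (fun k => (a * f k + b * g k : R^o)) =
          (fun n => a * series (f : R^o ^nat) n + b * series (g : R^o ^nat) n).
  by apply/funext => n; rewrite /series /= big_split /= -!mulr_sumr.
by apply: cvgD; apply: cvgMl_tmp.
Qed.

Lemma realC_real (x : R) : x%:C \is Num.real.
Proof. by rewrite complex_real. Qed.

Lemma Im_real z : z \is Num.real -> complex.Im z = 0.
Proof. by case: z => a b; rewrite complex_real => /eqP. Qed.

Lemma csum_to0 : csum_to (fun=> 0) 0.
Proof.
have e0 : series (fun=> (0 : R^o)) = fun=> 0.
  by apply/funext => n; rewrite /series /= big1.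
by split; rewrite /= e0; apply: cvg_cst.
Qed.

(* Stated in the shape consumed by [cvg_series_lincomb]. *)
Lemma ReD z w : complex.Re (z + w) = 1 * complex.Re z + 1 * complex.Re w.
Proof. by case: z; case: w => * /=; rewrite !mul1r. Qed.

Lemma ImD z w : complex.Im (z + w) = 1 * complex.Im z + 1 * complex.Im w.
Proof. by case: z; case: w => * /=; rewrite !mul1r. Qed.

Lemma ReM z w :
  complex.Re (z * w) = complex.Re z * complex.Re w + - complex.Im z * complex.Im w.
Proof. by case: z; case: w => * /=; rewrite mulNr. Qed.

Lemma ImM z w :
  complex.Im (z * w) = complex.Im z * complex.Re w + complex.Re z * complex.Im w.
Proof. by case: z; case: w => * /=; rewrite addrC. Qed.

Lemma csum_toD u v z w : csum_to u z -> csum_to v w ->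
  csum_to (fun k => u k + v k) (z + w).
Proof.
case=> hRu hIu [hRv hIv]; split.
- by rewrite ReD; under eq_fun do rewrite ReD; apply: cvg_series_lincomb.
- by rewrite ImD; under eq_fun do rewrite ImD; apply: cvg_series_lincomb.
Qed.

Lemma csum_toZ c u z : csum_to u z -> csum_to (fun k => c * u k) (c * z).
Proof.
case=> hR hI; split.
- by rewrite ReM; under eq_fun do rewrite ReM; apply: cvg_series_lincomb.
- by rewrite ImM; under eq_fun do rewrite ImM; apply: cvg_series_lincomb.
Qed.

Lemma csum_to_sum (I : Type) (r : seq I) (F : I -> nat -> R[i]) (z : I -> R[i]) :
  (forall i, csum_to (F i) (z i)) ->
  csum_to (fun k => \sum_(i <- r) F i k) (\sum_(i <- r) z i).
Proof.
move=> hF; elim: r => [|x r IH].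
  by rewrite big_nil; apply: eq_csum_to csum_to0 => k; rewrite big_nil.
by rewrite big_cons; apply: eq_csum_to (csum_toD (hF x) IH) => k; rewrite big_cons.
Qed.

Lemma normc_ge_Re_abs z : `|complex.Re z| <= Normc.normc z.
Proof. by case: z => a b /=; rewrite -sqrtr_sqr ler_wsqrtr // lerDl sqr_ge0. Qed.

Lemma normc_ge_Im_abs z : `|complex.Im z| <= Normc.normc z.
Proof. by case: z => a b /=; rewrite -sqrtr_sqr ler_wsqrtr // lerDr sqr_ge0. Qed.

Lemma normc_exp_coeff z k :
  Normc.normc (z ^+ k / k`!%:R) = Normc.normc z ^+ k / k`!%:R.
Proof.
rewrite Normc.normcM Normc.normcV normcMn Normc.normc1; congr (_ * _).
by elim: k => [|k IH]; rewrite ?expr0 ?Normc.normc1 // !exprS Normc.normcM IH.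
Qed.

(* Dominated by the real exponential series of [Normc.normc z]. *)
Lemma is_cvg_series_exp_part (f : R[i] -> R) z :
  (forall w, `|f w| <= Normc.normc w) ->
  cvgn (series (fun k => (f (z ^+ k / k`!%:R) : R^o))).
Proof.
move=> hf; apply: normed_cvg.
apply: (@series_le_cvg R _ (exp_coeff (Normc.normc z))) => [n|n|n|].
- exact: normr_ge0.
- by apply: exp_coeff_ge0; case: z {hf} => a b /=; rewrite sqrtr_ge0.
- by rewrite /exp_coeff /= -normc_exp_coeff.
- exact: is_cvg_series_exp_coeff.
Qed.

Lemma csum_to_exp z : csum_to (fun k => z ^+ k / k`!%:R) (cexp z).
Proof.
split; apply: is_cvg_series_exp_part.
- exact: normc_ge_Re_abs.
- exact: normc_ge_Im_abs.
Qed.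

End ComplexSeries.

Section GroupConvolution.
Variables (R : realType) (G : finZmodType) (w : G -> R[i]).
Implicit Types (X : op R G) (c : G -> R[i]) (x y : G).

Definition shift_gen X : op R G :=
  fun a b => \sum_s w s * X (a - s) (b - s) - X a b.

Definition conv_gen c : G -> R[i] := fun m => \sum_s w s * c (m - s) - c m.

Definition orbit_op x y c : op R G :=
  fun a b => \sum_m c m * ((a == m + x) && (b == m + y))%:R.

Lemma shift_gen_orbit x y c :
  shift_gen (orbit_op x y c) = orbit_op x y (conv_gen c).
Proof.
apply/funext => a; apply/funext => b; rewrite /shift_gen /orbit_op /conv_gen.
under [RHS]eq_bigr do rewrite mulrBl mulr_suml.
rewrite sumrB exchange_big /=; congr (_ - _); apply: eq_bigr => s _.
rewrite mulr_sumr (reindex_inj (addIr (- s))) /=; apply: eq_bigr => m _.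
by rewrite mulrA !(addrAC m (- s)) !(inj_eq (addIr _)).
Qed.

Lemma iter_shift_gen_orbit k x y c :
  iter k shift_gen (orbit_op x y c) = orbit_op x y (iter k conv_gen c).
Proof. by elim: k => //= k ->; rewrite shift_gen_orbit. Qed.

Lemma orbit_op_delta x y :
  orbit_op x y (fun m => (m == 0)%:R) = fun a b => ((a == x) && (b == y))%:R.
Proof.
apply/funext => a; apply/funext => b; rewrite /orbit_op (bigD1 0) //= eqxx mul1r.
rewrite big1 ?addr0 ?add0r // => m /negPf->; exact: mul0r.
Qed.

Lemma shift_genZ (z : R[i]) X :
  shift_gen (fun a b => z * X a b) = fun a b => z * shift_gen X a b.
Proof.
apply/funext => a; apply/funext => b; rewrite /shift_gen mulrBr mulr_sumr.
by congr (_ - _); apply: eq_bigr => s _; rewrite mulrCA.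
Qed.

Lemma iter_shift_genZ (z : R[i]) X k :
  iter k shift_gen (fun a b => z * X a b) = fun a b => z * iter k shift_gen X a b.
Proof. by elim: k => //= k ->; rewrite shift_genZ. Qed.

Section Eigenfunctions.
Variables (I : finType) (h g : I -> G -> R[i]).
Hypothesis h_sub : forall i m s, h i (m - s) = h i m * g i s.

Definition conv_eigenvalue i : R[i] := \sum_s w s * g i s - 1.

Lemma conv_gen_char i : conv_gen (h i) = fun m => conv_eigenvalue i * h i m.
Proof.
apply/funext => m; rewrite /conv_gen /conv_eigenvalue mulrBl mul1r mulr_suml.
by congr (_ - _); apply: eq_bigr => s _; rewrite h_sub; ring.
Qed.

Lemma conv_gen_sum (a : I -> R[i]) :
  conv_gen (fun m => \sum_i a i * h i m) = fun m => \sum_i a i * conv_gen (h i) m.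
Proof.
apply/funext => m; rewrite /conv_gen.
under [RHS]eq_bigr do rewrite mulrBr mulr_sumr.
rewrite sumrB exchange_big /=; congr (_ - _); apply: eq_bigr => s _.
by rewrite mulr_sumr; apply: eq_bigr => i _; ring.
Qed.

Lemma iter_conv_gen_sum (a : I -> R[i]) k :
  iter k conv_gen (fun m => \sum_i a i * h i m) =
  fun m => \sum_i (a i * conv_eigenvalue i ^+ k) * h i m.
Proof.
elim: k => [|k IH] /=; apply/funext => m.
  by apply: eq_bigr => i _; rewrite expr0 mulr1.
rewrite IH conv_gen_sum; apply: eq_bigr => i _.
by rewrite conv_gen_char exprSr; ring.
Qed.

End Eigenfunctions.

Hypothesis w_real : forall s, w s \is Num.real.

Lemma iter_conv_gen_real c k :
  (forall m, c m \is Num.real) -> forall m, iter k conv_gen c m \is Num.real.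
Proof.
move=> c_real; elim: k => //= k IH m.
by rewrite rpredB // rpred_sum // => s _; rewrite rpredM.
Qed.

End GroupConvolution.

HB.instance Definition _ (U V : finZmodType) := GRing.Zmodule.on (U * V)%type.

Section ShiftMatrices.
Variable R : realType.

Lemma sum_delta_l (T : finType) (x : T) (f : T -> R[i]) :
  \sum_c (c == x)%:R * f c = f x.
Proof.
rewrite (bigD1 x) //= eqxx mul1r big1 ?addr0 // => c /negPf->; exact: mul0r.
Qed.

Lemma sum_delta_r (T : finType) (x : T) (f : T -> R[i]) :
  \sum_c f c * (c == x)%:R = f x.
Proof. by under eq_bigr do rewrite mulrC; exact: sum_delta_l. Qed.

Lemma conj_translation (G : finZmodType) (d : G) (X : op R G) a b :
  let U : op R G := fun a c => (c == a + d)%:R in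
  opmul (opmul U X) (opadj U) a b = X (a + d) (b + d).
Proof.
rewrite /opmul /opadj /=; under eq_bigr do rewrite sum_delta_l rmorph_nat.
exact: sum_delta_r.
Qed.

Lemma zaddE n (i j : 'I_n.+1) : zadd i j = i + j.
Proof. exact: val_inj. Qed.

Lemma zoppE n (i : 'I_n.+1) : zopp i = - i.
Proof. exact: val_inj. Qed.

Lemma inZpD n a b : inZp (a + b) = inZp a + inZp b :> 'I_n.+1.
Proof. by apply: val_inj; rewrite /= modnDm. Qed.

Lemma JshiftE n : @Jshift R n.+1 = fun a b => (b == a + inZp 1)%:R.
Proof.
apply/funext => a; apply/funext => b; rewrite /Jshift /outer /bvec.
under eq_bigr do rewrite conjC_nat eq_sym.
rewrite sum_delta_l; congr ((b == _)%:R).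
by apply: val_inj; rewrite /= modnDmr addn1.
Qed.

Lemma Jshift_powE n k : oppow (@Jshift R n.+1) k = fun a b => (b == a + inZp k)%:R.
Proof.
apply/funext => a; apply/funext => b.
elim: k a b => [|k IH] a b.
  by rewrite /= /opid (_ : inZp 0 = 0) ?addr0 1?eq_sym //; apply: val_inj.
rewrite /oppow iterS -/(oppow _ k) /opmul.
under eq_bigr do rewrite IH.
by rewrite JshiftE sum_delta_l -addrA -inZpD add1n.
Qed.

Variables p' q' : nat.
Local Notation P := p'.+1.
Local Notation Q := q'.+1.
Local Notation K := ('I_P * 'I_Q)%type.

Definition alphaC (alpha : 'I_P -> 'I_Q -> R) (s : K) : R[i] := (alpha s.1 s.2)%:C.

Lemma optens_Jshift_powE (s u : nat) :
  optens (oppow (@Jshift R P) s) (oppow (@Jshift R Q) u) =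
  fun a c => (c == a + (inZp s, inZp u))%:R.
Proof.
apply/funext => -[a1 a2]; apply/funext => -[c1 c2].
by rewrite /optens !Jshift_powE -natrM mulnb.
Qed.

Lemma Lstar_shift_gen (alpha : 'I_P -> 'I_Q -> R) :
  Lstar alpha = shift_gen (alphaC alpha).
Proof.
apply/funext => X; apply/funext => a; apply/funext => b.
rewrite /Lstar /shift_gen /alphaC; congr (_ - _).
rewrite (reindex_inj (@oppr_inj K)); apply: eq_bigr => s _.
rewrite optens_Jshift_powE conj_translation !valZpK !zoppE.
by case: s => i j /=; rewrite !opprK.
Qed.

End ShiftMatrices.

Section PrimitiveRoots.
Variables (R : realType) (n : nat) (w : R[i]).
Hypothesis w_prim : n.+1.-primitive_root w.

Lemma prim_root_mulJ : w * w^* = 1.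
Proof.
have w_norm : `|w| ^+ n.+1 = 1 by rewrite -normrX prim_expr_order // normr1.
by rewrite -normCK (eqP (_ : `|w| == 1)) ?expr1n // -(pexpr_eq1 (n := n.+1)) // w_norm.
Qed.

Lemma prim_expr_subJ (x y : 'I_n.+1) k :
  w ^+ ((x - y)%R * k) = w ^+ (x * k) * (w^*) ^+ (y * k).
Proof.
have e : w ^+ ((x - y)%R * k) * w ^+ (y * k) = w ^+ (x * k).
  by rewrite -exprD -mulnDl !exprM -(prim_expr_mod w_prim) -[in RHS](subrK y x).
by rewrite -e -mulrA -exprMn prim_root_mulJ expr1n mulr1.
Qed.

Lemma prim_root_sum_expr (x : 'I_n.+1) :
  \sum_(k < n.+1) w ^+ (x * k) = ((x : nat) == 0)%:R * n.+1%:R.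
Proof.
have [->|x_neq0] := eqVneq (x : nat) 0.
  by under eq_bigr do rewrite mul0n expr0; rewrite sumr_const card_ord mul1r.
have wx_neq1 : w ^+ x != 1.
  rewrite -(prim_order_dvd w_prim); apply/negP => /dvdn_leq.
  by rewrite lt0n x_neq0 leqNgt ltn_ord => /(_ isT).
have := subrX1 (w ^+ x) n.+1.
rewrite -exprM mulnC exprM (prim_expr_order w_prim) expr1n subrr.
move=> /esym/eqP; rewrite mulf_eq0 subr_eq0 (negPf wx_neq1) /= => /eqP sum0.
by rewrite mul0r; under eq_bigr do rewrite exprM.
Qed.

End PrimitiveRoots.

Section ZpZqCharacters.
Variables (R : realType) (p' q' : nat).
Local Notation P := p'.+1.
Local Notation Q := q'.+1.
Local Notation K := ('I_P * 'I_Q)%type.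
Variables (alpha : 'I_P -> 'I_Q -> R) (wp wq : R[i]).
Hypothesis alpha00 : forall (i : 'I_P) (j : 'I_Q), (i : nat) = 0 -> (j : nat) = 0 ->
  alpha i j = 0.
Hypotheses (wp_prim : P.-primitive_root wp) (wq_prim : Q.-primitive_root wq).

Definition zchar (kl m : K) : R[i] := wp ^+ (m.1 * kl.1) * wq ^+ (m.2 * kl.2).
Definition zcochar (kl s : K) : R[i] := wp^* ^+ (s.1 * kl.1) * wq^* ^+ (s.2 * kl.2).
Definition zlambda (kl : K) : R[i] := lambda alpha wp wq kl.1 kl.2.

Lemma zchar_sub kl m s : zchar kl (m - s) = zchar kl m * zcochar kl s.
Proof.
rewrite /zchar /zcochar /= (prim_expr_subJ wp_prim) (prim_expr_subJ wq_prim).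
by rewrite -!mulrA; congr (_ * _); rewrite mulrCA.
Qed.

(* [alpha'] replaces the vanishing [alpha 0 0] by [- 1]. *)
Lemma zlambdaE kl : zlambda kl = conv_eigenvalue (alphaC alpha) zcochar kl.
Proof.
rewrite /zlambda /lambda /conv_eigenvalue pair_big /=.
rewrite (bigD1 0) //= [in RHS](bigD1 0) //= /alphaC alpha00 // /zcochar /=.
rewrite !mul0n !expr0 !mulr1 /alpha' /= rmorphN1 addrC add0r; congr (_ + _).
apply: eq_bigr => -[i j] /= ij_neq0; rewrite mulrA; case: ifP => // /andP[i0 j0].
by case/eqP: ij_neq0; congr pair; apply: val_inj; apply/eqP.
Qed.

Lemma delta_zchar m : (m == 0)%:R = \sum_kl (P * Q)%:R^-1 * zchar kl m.
Proof.
rewrite -mulr_sumr /zchar.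
rewrite -(pair_big predT predT (fun (k : 'I_P) (l : 'I_Q) => wp ^+ (m.1 * k) * wq ^+ (m.2 * l))).
rewrite -big_distrlr /= (prim_root_sum_expr wp_prim) (prim_root_sum_expr wq_prim).
case: m => m1 m2; rewrite xpair_eqE -!val_eqE /=.
case: eqP => _; case: eqP => _ /=; rewrite ?mul0r ?mulr0 // !mul1r.
by rewrite -natrM mulVf // pnatr_eq0 muln_eq0.
Qed.

End ZpZqCharacters.

Section Semigroup.
Variables (R : realType) (p' q' : nat).
Local Notation P := p'.+1.
Local Notation Q := q'.+1.
Local Notation K := ('I_P * 'I_Q)%type.
Variables (alpha : 'I_P -> 'I_Q -> R) (wp wq : R[i]).
Hypothesis alpha00 : forall (i : 'I_P) (j : 'I_Q), (i : nat) = 0 -> (j : nat) = 0 ->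
  alpha i j = 0.
Hypotheses (wp_prim : P.-primitive_root wp) (wq_prim : Q.-primitive_root wq).
Local Notation zchar := (zchar wp wq).
Local Notation zlambda := (zlambda alpha wp wq).
Local Notation eb := (@ebas R P Q).

Lemma iter_conv_delta k :
  iter k (conv_gen (alphaC alpha)) (fun m => (m == 0)%:R) =
  fun m => \sum_kl ((P * Q)%:R^-1 * zlambda kl ^+ k) * zchar kl m.
Proof.
rewrite (funext (delta_zchar wp_prim wq_prim)).
rewrite (iter_conv_gen_sum _ (zchar_sub wp_prim wq_prim)).
by under eq_fun do under eq_bigr do rewrite -(zlambdaE wp wq alpha00).
Qed.

Lemma ebasE (i : 'I_P) (j : 'I_Q) x : eb i j x = (x == (i, j))%:R.
Proof. by case: x => x1 x2; rewrite /ebas /vtens /bvec xpair_eqE -natrM mulnb. Qed.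

Lemma outer_ebasE (i i' : 'I_P) (j j' : 'I_Q) :
  outer (eb i j) (eb i' j') = orbit_op (i, j) (i', j') (fun m => (m == 0)%:R).
Proof.
rewrite orbit_op_delta; apply/funext => a; apply/funext => b.
by rewrite /outer !ebasE rmorph_nat -natrM mulnb.
Qed.

Lemma iter_Lstar_outer (i i' : 'I_P) (j j' : 'I_Q) k :
  iter k (Lstar alpha) (outer (eb i j) (eb i' j')) =
  orbit_op (i, j) (i', j')
    (fun m => \sum_kl ((P * Q)%:R^-1 * zlambda kl ^+ k) * zchar kl m).
Proof. by rewrite Lstar_shift_gen outer_ebasE iter_shift_gen_orbit iter_conv_delta. Qed.

Lemma PhiE m n t :
  Phi alpha wp wq m n t = \sum_kl zchar kl (m, n) * cexp (t%:C * zlambda kl).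
Proof. by rewrite /Phi pair_big. Qed.

Definition evolved_unit (i i' : 'I_P) (j j' : 'I_Q) (t : R) : op R K :=
  fun a b => ((P * Q)%:R)^-1 *
    \sum_(m : 'I_P) \sum_(n : 'I_Q)
      Phi alpha wp wq m n t *
      outer (eb (zadd m i) (zadd n j)) (eb (zadd m i') (zadd n j')) a b.

Lemma csum_to_Tstar_outer (i i' : 'I_P) (j j' : 'I_Q) t a b :
  csum_to (fun k => t%:C ^+ k / k`!%:R *
      iter k (Lstar alpha) (outer (eb i j) (eb i' j')) a b)
    (evolved_unit i i' j j' t a b).
Proof.
pose E (m : K) : R[i] := ((a == m + (i, j)) && (b == m + (i', j')))%:R.
have -> : evolved_unit i i' j j' t a b = \sum_m \sum_kl
    (E m * ((P * Q)%:R^-1 * zchar kl m)) * cexp (t%:C * zlambda kl).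
  rewrite /evolved_unit pair_big mulr_sumr; apply: eq_bigr => -[m n] _.
  rewrite PhiE outer_ebasE orbit_op_delta !zaddE mulr_suml mulr_sumr.
  by apply: eq_bigr => kl _; rewrite /E; ring.
apply: eq_csum_to (csum_to_sum _ (fun m => csum_to_sum _ (fun kl =>
  csum_toZ _ (csum_to_exp (t%:C * zlambda kl))))) => k.
rewrite iter_Lstar_outer /orbit_op mulr_sumr; apply: eq_bigr => m _.
rewrite mulr_suml mulr_sumr; apply: eq_bigr => kl _.
by rewrite exprMn /E; ring.
Qed.

Lemma Tstar_outer (i i' : 'I_P) (j j' : 'I_Q) t :
  Tstar alpha t (outer (eb i j) (eb i' j')) = evolved_unit i i' j j' t.
Proof.
apply/funext => a; apply/funext => b.
exact: csum_limE (csum_to_Tstar_outer i i' j j' t a b).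
Qed.

Lemma Tstar_scale_outer (c : R[i]) (i i' : 'I_P) (j j' : 'I_Q) t :
  Tstar alpha t (fun x y => c * outer (eb i j) (eb i' j') x y) =
  fun a b => c * evolved_unit i i' j j' t a b.
Proof.
apply/funext => a; apply/funext => b; apply: csum_limE.
apply: eq_csum_to (csum_toZ c (csum_to_Tstar_outer i i' j j' t a b)) => k.
by rewrite Lstar_shift_gen iter_shift_genZ -Lstar_shift_gen mulrCA.
Qed.

(* The k-th term of the series defining [Phi] is a real multiple of the k-th
   iterated convolution of the unit mass by the real weights [alpha]. *)
Lemma Phi_term_real m k (t : R) :
  \sum_kl zchar kl m * ((t%:C * zlambda kl) ^+ k / k`!%:R) \is Num.real.
Proof.
have -> : \sum_kl zchar kl m * ((t%:C * zlambda kl) ^+ k / k`!%:R) =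
    ((P * Q)%:R * (t ^+ k / k`!%:R))%:C *
    iter k (conv_gen (alphaC alpha)) (fun m => (m == 0)%:R) m.
  rewrite iter_conv_delta mulr_sumr; apply: eq_bigr => kl _.
  rewrite rmorphM rmorph_nat fmorph_div rmorphXn rmorph_nat /= exprMn.
  by field; rewrite !(addrC 1) !natr1 !pnatr_eq0 -!lt0n fact_gt0.
by rewrite rpredM ?realC_real // iter_conv_gen_real // => s; exact: realC_real.
Qed.

Lemma Phi_Im0 m n t : complex.Im (Phi alpha wp wq m n t) = 0.
Proof.
have [_] := csum_to_sum (index_enum K) (fun kl =>
  csum_toZ (zchar kl (m, n)) (csum_to_exp (t%:C * zlambda kl))).
rewrite -PhiE (_ : series _ = fun=> 0); first by move/cvg_lim => <- //; rewrite lim_cst.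
apply/funext => N; rewrite /series /= big1 // => k _.
exact/Im_real/Phi_term_real.
Qed.

Local Notation sqrtPQ := ((Num.sqrt ((P * Q)%:R : R))%:C).

Lemma Omega_rhoE x : @Omega_rho R P Q x = sqrtPQ^-1 * eb x.1.1 x.1.2 x.2.
Proof.
congr (_ * _); under eq_bigr => ij _ do rewrite /vtens ebasE eq_sym.
by rewrite sum_delta_l.
Qed.

Lemma uvecE (m : 'I_P) (n : 'I_Q) x :
  uvec m n x = sqrtPQ^-1 * eb (zadd m x.1.1) (zadd n x.1.2) x.2.
Proof.
congr (_ * _); under eq_bigr => ij _ do rewrite /vtens ebasE eq_sym.
by rewrite sum_delta_l.
Qed.

Lemma Omega_tE t : Omega_t alpha t =
  fun a b => ((P * Q)%:R)^-1 *
    \sum_(m : 'I_P) \sum_(n : 'I_Q)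
      Phi alpha wp wq m n t * outer (uvec m n) (uvec m n) a b.
Proof.
apply/funext => a; apply/funext => b; rewrite /Omega_t /idtens.
have -> : (fun x y => outer (@Omega_rho R P Q) (@Omega_rho R P Q) (a.1, x) (b.1, y)) =
    fun x y => sqrtPQ^-1 * sqrtPQ^-1^* * outer (eb a.1.1 a.1.2) (eb b.1.1 b.1.2) x y.
  apply/funext => x; apply/funext => y.
  by rewrite /outer !Omega_rhoE /= rmorphM; ring.
rewrite Tstar_scale_outer /evolved_unit mulrCA; congr (_ * _).
rewrite mulr_sumr; apply: eq_bigr => m _; rewrite mulr_sumr; apply: eq_bigr => n _.
by rewrite /outer !uvecE !rmorphM; ring.
Qed.

End Semigroup.

Theorem mainTheorem9 (R : realType) (p q : nat) (hp : (0 < p)%N) (hq : (0 < q)%N)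
  (alpha : 'I_p -> 'I_q -> R)
  (alpha_ge0 : forall i j, 0 <= alpha i j)
  (alpha_le1 : forall i j, alpha i j <= 1)
  (alpha_sum : \sum_(i : 'I_p) \sum_(j : 'I_q) alpha i j = 1)
  (alpha00 : forall (i : 'I_p) (j : 'I_q), (i : nat) = 0%N -> (j : nat) = 0%N ->
     alpha i j = 0)
  (wp wq : R[i]) (hwp : p.-primitive_root wp) (hwq : q.-primitive_root wq) :
  (forall (i i' : 'I_p) (j j' : 'I_q) (t : R), 0 <= t ->
     Tstar alpha t (outer (ebas i j) (ebas i' j')) =
     (fun a b => ((p * q)%:R)^-1 *
        \sum_(m : 'I_p) \sum_(n : 'I_q)
          Phi alpha wp wq m n t *
          outer (ebas (zadd m i) (zadd n j)) (ebas (zadd m i') (zadd n j')) a b))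
  /\ (forall (m : 'I_p) (n : 'I_q) (t : R), 0 <= t ->
        complex.Im (Phi alpha wp wq m n t) = 0)
  /\ (forall t : R, 0 <= t ->
        Omega_t alpha t =
        (fun a b => ((p * q)%:R)^-1 *
           \sum_(m : 'I_p) \sum_(n : 'I_q)
             Phi alpha wp wq m n t * outer (uvec m n) (uvec m n) a b)).
Proof.
destruct p as [|p']; first by [].
destruct q as [|q']; first by [].
split; [|split] => [i i' j j' t _|m n t _|t _].
- exact: (Tstar_outer alpha00 hwp hwq).
- exact: (Phi_Im0 alpha00 hwp hwq).
- exact: (Omega_tE alpha00 hwp hwq).
Qed.
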